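(* Let $A,L$ be real symmetric $n\times n$ matrices such that the real Lie algebra generated by $iA$ and $iL$ equals $u(n)$. Let $\mathcal{S}$ be the real linear span of all matrices of the form $ad_{iA}^{k_1}\, ad_{iL}^{k_2}\cdots ad_{iA}^{k_{s-1}}\, ad_{iL}^{k_s}\,[iA,iL]$, where $s$ and $k_1,\dots,k_s$ range over nonnegative integers. Then $\mathcal{S}=su(n)$.
   Context: $ad_X(Y):=[X,Y]=XY-YX$. The real Lie algebra generated by a set of matrices is the smallest real vector space containing them and closed under commutators. $u(n)$ is the real Lie algebra of $n\times n$ complex skew-Hermitian matrices, and $su(n)$ is the real Lie algebra of $n\times n$ complex skew-Hermitian matrices with zero trace. *)

From HB Require Import structures.
From mathcomp Require Import all_boot all_order all_algebra.
From mathcomp Require Import complex.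
From mathcomp Require Import reals.
Set Implicit Arguments. Unset Strict Implicit. Unset Printing Implicit Defensive.
Import Order.TTheory GRing.Theory Num.Theory.
Local Open Scope ring_scope.
Local Open Scope complex_scope.

Section LieDefs.
Variables (R : realType) (n : nat).
Local Notation M := 'M[R[i]]_n.

Definition lie_br (X Y : M) : M := X *m Y - Y *m X.
Definition ad (X : M) : M -> M := lie_br X.

Definition cplx_mx (A : 'M[R]_n) : M := map_mx (fun x => x%:C) A.

Definition adjoint (X : M) : M := (map_mx (@conjc R) X)^T.

Definition in_u (X : M) : Prop := adjoint X = - X.
Definition in_su (X : M) : Prop := in_u X /\ \tr X = 0.

Definition real_subspace (V : M -> Prop) : Prop :=
  [/\ V 0,
      (forall X Y, V X -> V Y -> V (X + Y)) &
      (forall (r : R) X, V X -> V (r%:C *: X))].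

Definition real_lie_subalgebra (V : M -> Prop) : Prop :=
  real_subspace V /\ (forall X Y, V X -> V Y -> V (lie_br X Y)).

Definition real_span (P : M -> Prop) (X : M) : Prop :=
  forall V, real_subspace V -> (forall Y, P Y -> V Y) -> V X.

Definition real_lie_generated (P : M -> Prop) (X : M) : Prop :=
  forall V, real_lie_subalgebra V -> (forall Y, P Y -> V Y) -> V X.

(* adword X Y [:: k1; k2; ...; ks] B
     = ad_X^k1 (ad_Y^k2 (ad_X^k3 ( ... B))) ,
   the operators alternating X, Y, X, Y, ... starting with X. *)
Fixpoint adword (X Y : M) (ks : seq nat) (B : M) : M :=
  match ks with
  | [::] => B
  | k :: ks' => iter k (ad X) (adword Y X ks' B)
  end.

End LieDefs.

From HB Require Import structures.
From mathcomp Require Import all_boot all_order all_algebra.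
From mathcomp Require Import complex.
From mathcomp Require Import reals.
Set Implicit Arguments. Unset Strict Implicit. Unset Printing Implicit Defensive.
Import Order.TTheory GRing.Theory Num.Theory.
Local Open Scope ring_scope.
Local Open Scope complex_scope.

(* Let a = iA, l = iL and let S be the span of the words ad_a^k1 ad_l^k2 ... [a,l].
   Every word lies in the Lie algebra generated by a and l and has trace zero, so
   S is in su(n). Conversely, S is stable under ad a and ad l, hence under ad x
   for every x in the generated Lie algebra g = u(n); since [a,l] is in S, the
   subspace span{a,l} + S is a Lie subalgebra, so it contains g, and therefore
   [u(n), u(n)] = [g, g] is in S. Finally [u(n), u(n)] spans su(n): the
   elementary skew-Hermitian matrices are brackets. *)

Section LieSubalgebras.
Variables (R : realType) (n : nat).
Local Notation M := 'M[R[i]]_n.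
Implicit Types (X Y Z : M) (V : M -> Prop).

Lemma lie_brDl X Y Z : lie_br (X + Y) Z = lie_br X Z + lie_br Y Z.
Proof. by rewrite /lie_br mulmxDl mulmxDr opprD addrACA. Qed.

Lemma lie_brDr X Y Z : lie_br X (Y + Z) = lie_br X Y + lie_br X Z.
Proof. by rewrite /lie_br mulmxDl mulmxDr opprD addrACA. Qed.

Lemma lie_brZl c X Y : lie_br (c *: X) Y = c *: lie_br X Y.
Proof. by rewrite /lie_br scalerBr -scalemxAl -scalemxAr. Qed.

Lemma lie_brZr X c Y : lie_br X (c *: Y) = c *: lie_br X Y.
Proof. by rewrite /lie_br scalerBr -scalemxAl -scalemxAr. Qed.

Lemma lie_br0l X : lie_br 0 X = 0.
Proof. by rewrite /lie_br mulmx0 mul0mx subrr. Qed.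

Lemma lie_brxx X : lie_br X X = 0.
Proof. exact: subrr. Qed.

Lemma lie_brC X Y : lie_br Y X = - lie_br X Y.
Proof. by rewrite /lie_br opprB. Qed.

Lemma lie_br_jacobi X Y Z :
  lie_br (lie_br X Y) Z = lie_br X (lie_br Y Z) - lie_br Y (lie_br X Z).
Proof.
rewrite /lie_br !mulmxBl !mulmxBr !mulmxA.
move: (X *m Y *m Z) (Y *m X *m Z) (Z *m X *m Y) (Z *m Y *m X) => xyz yxz zxy zyx.
move: (X *m Z *m Y) (Y *m Z *m X) => xzy yzx.
by rewrite !opprB !addrA [RHS](ACl (1*8*3*6*2*5*4*7)) /= !subrK.
Qed.

Lemma lie_br_lincomb (c d c' d' : R[i]) X Y :
  lie_br (c *: X + d *: Y) (c' *: X + d' *: Y) = (c * d' - d * c') *: lie_br X Y.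
Proof.
rewrite lie_brDl !lie_brDr !lie_brZl !lie_brZr !lie_brxx !scaler0 add0r addr0.
by rewrite [lie_br Y X]lie_brC !scalerA scalerN scalerBl.
Qed.

Lemma mxtrace_lie_br X Y : \tr (lie_br X Y) = 0.
Proof. by rewrite /lie_br linearB /= mxtrace_mulC subrr. Qed.

Lemma real_subspaceN V X : real_subspace V -> V X -> V (- X).
Proof. by case=> _ _ VZ /(VZ (-1)); rewrite raddfN /= scaleN1r. Qed.

Lemma real_subspace_sum V (I : Type) (r : seq I) (P : pred I) (F : I -> M) :
  real_subspace V -> (forall i, P i -> V (F i)) -> V (\sum_(i <- r | P i) F i).
Proof. by case=> V0 VD _ VF; apply: big_ind. Qed.

Lemma real_subspaceI V1 V2 :
  real_subspace V1 -> real_subspace V2 -> real_subspace (fun X => V1 X /\ V2 X).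
Proof.
case=> [V10 V1D V1Z] [V20 V2D V2Z]; split=> [//|X Y [? ?] [? ?]|r X [? ?]].
  by split; [exact: V1D | exact: V2D].
by split; [exact: V1Z | exact: V2Z].
Qed.

Lemma real_subspace_traceless : real_subspace (fun X : M => \tr X = 0).
Proof.
split=> [|X Y trX trY|r X trX]; first exact: mxtrace0.
  by rewrite mxtraceD trX trY addr0.
by rewrite mxtraceZ trX mulr0.
Qed.

Lemma real_span_subspace (P : M -> Prop) : real_subspace (real_span P).
Proof.
split=> [V [] //|X Y SX SY V VV VP|r X SX V VV VP]; case: (VV) => _ VD VZ.
  by apply: VD; [exact: SX | exact: SY].
by apply: VZ; exact: SX.
Qed.

Lemma real_span_gen (P : M -> Prop) X : P X -> real_span P X.
Proof. by move=> PX V _; apply. Qed.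

Lemma real_span_stable (P : M -> Prop) (f : M -> M) :
  (forall X Y, f (X + Y) = f X + f Y) -> (forall c X, f (c *: X) = c *: f X) ->
  (forall X, P X -> real_span P (f X)) ->
  forall X, real_span P X -> real_span P (f X).
Proof.
move=> fD fZ fP X SX; have [S0 SD SZ] := real_span_subspace P.
apply: (SX (fun Y => real_span P (f Y))) => //.
split=> [|Y Z SY SZ'|r Y SY]; last by rewrite fZ; apply: SZ.
  by rewrite -(scale0r 0) fZ scale0r.
by rewrite fD; apply: SD.
Qed.

Lemma real_lie_generated_subalgebra (P : M -> Prop) :
  real_lie_subalgebra (real_lie_generated P).
Proof.
split; first split.
- by move=> V [[]].
- move=> X Y gX gY V VV VP; have [[_ VD _] _] := VV.
  by apply: VD; [exact: gX | exact: gY].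
- by move=> r X gX V VV VP; have [[_ _ VZ] _] := VV; apply: VZ; exact: gX.
- move=> X Y gX gY V VV VP; have [_ VB] := VV.
  by apply: VB; [exact: gX | exact: gY].
Qed.

Lemma real_lie_generated_gen (P : M -> Prop) X : P X -> real_lie_generated P X.
Proof. by move=> PX V _; apply. Qed.

Definition lie_stabilizer V X : Prop := forall Y, V Y -> V (lie_br X Y).

Lemma lie_stabilizer_subalgebra V :
  real_subspace V -> real_lie_subalgebra (lie_stabilizer V).
Proof.
move=> VV; have [V0 VD VZ] := VV; split; first split.
- by move=> Y _; rewrite lie_br0l.
- by move=> X1 X2 h1 h2 Y VY; rewrite lie_brDl; apply: VD; [exact: h1 | exact: h2].
- by move=> r X hX Y VY; rewrite lie_brZl; apply: VZ; exact: hX.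
- move=> X1 X2 h1 h2 Y VY; rewrite lie_br_jacobi; apply: VD; first exact/h1/h2.
  exact/(real_subspaceN VV)/h2/h1.
Qed.

Lemma adword_ind (Q : M -> Prop) X Y ks B :
  (forall Z, Q Z -> Q (ad X Z)) -> (forall Z, Q Z -> Q (ad Y Z)) -> Q B ->
  Q (adword X Y ks B).
Proof.
elim: ks X Y => [|k ks IH] X Y QX QY QB //=.
by elim: k => [|k IHk] /=; [exact: IH | exact: QX].
Qed.

End LieSubalgebras.

Section SpecialUnitary.
Variables (R : realType) (n : nat).
Local Notation M := 'M[R[i]]_n.
Implicit Types (X Y : M) (V : M -> Prop) (j k : 'I_n) (z : R[i]).

Lemma adjointD X Y : adjoint (X + Y) = adjoint X + adjoint Y.
Proof. by apply/matrixP => p q; rewrite !mxE rmorphD. Qed.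

Lemma adjointN X : adjoint (- X) = - adjoint X.
Proof. by apply/matrixP => p q; rewrite !mxE rmorphN. Qed.

Lemma adjointZ z X : adjoint (z *: X) = z^* *: adjoint X.
Proof. by apply/matrixP => p q; rewrite !mxE rmorphM. Qed.

Lemma adjoint_delta j k : adjoint (delta_mx j k : M) = delta_mx k j.
Proof. by apply/matrixP => p q; rewrite !mxE conjc_nat andbC. Qed.

Definition skew_unit j k z : M := z *: delta_mx j k - z^* *: delta_mx k j.
Definition imag_unit j : M := 'i *: delta_mx j j.

Lemma skew_unit_in_u j k z : in_u (skew_unit j k z).
Proof.
rewrite /in_u /skew_unit adjointD adjointN !adjointZ !adjoint_delta conjCK.
by rewrite opprB addrC.
Qed.

Lemma imag_unit_in_u j : in_u (imag_unit j).
Proof. by rewrite /in_u /imag_unit adjointZ adjoint_delta conjCi scaleNr. Qed.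

Lemma lie_br_imag_skew j k z : j != k ->
  lie_br (imag_unit j) (skew_unit j k z) = skew_unit j k ('i * z).
Proof.
move=> neq_jk; rewrite /lie_br /imag_unit /skew_unit.
rewrite mulmxBr mulmxBl -!scalemxAl -!scalemxAr !mul_delta_mx_cond eqxx.
rewrite (negbTE neq_jk) eq_sym (negbTE neq_jk) !mulr0n !mulr1n !scaler0.
rewrite !subr0 sub0r; congr (_ - _); first exact: scalerA.
by rewrite rmorphM /= conjCi mulNr scaleNr scalerA mulrC.
Qed.

Lemma lie_br_skew_skew j k z : j != k ->
  lie_br (skew_unit j k 1) (skew_unit j k z) =
  (z - z^*) *: (delta_mx j j - delta_mx k k).
Proof.
move=> neq_jk; rewrite /lie_br /skew_unit conjC1 !scale1r.
rewrite !mulmxBr !mulmxBl -!scalemxAl -!scalemxAr !mul_delta_mx_cond !eqxx.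
rewrite (negbTE neq_jk) eq_sym (negbTE neq_jk) !mulr0n !mulr1n !scaler0.
move: (delta_mx j j) (delta_mx k k) => Ejj Ekk.
rewrite !sub0r !subr0 scalerBl !scalerBr opprB opprK.
by rewrite opprB addrACA ![- _ + _]addrC.
Qed.

Lemma in_u_sum_skew_units X : in_u X ->
  2%:R *: X = \sum_j \sum_k skew_unit j k (X j k).
Proof.
move=> uX; rewrite /skew_unit; under eq_bigr do rewrite sumrB.
rewrite sumrB -matrix_sum_delta.
suff -> : \sum_j \sum_k (X j k)^* *: delta_mx k j = adjoint X.
  by rewrite uX opprK scaler_nat mulr2n.
rewrite [RHS]matrix_sum_delta exchange_big /=.
by apply: eq_bigr => j _; apply: eq_bigr => k _; rewrite !mxE.
Qed.

Lemma traceless_sum_skew_diag X j0 : \tr X = 0 ->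
  \sum_j skew_unit j j (X j j) =
  \sum_j (X j j - (X j j)^*) *: (delta_mx j j - delta_mx j0 j0).
Proof.
move=> trX; have sum_im : \sum_j (X j j - (X j j)^*) = 0.
  by rewrite sumrB -rmorph_sum -/(mxtrace X) trX rmorph0 subr0.
have -> : \sum_j skew_unit j j (X j j) = \sum_j (X j j - (X j j)^*) *: delta_mx j j.
  by apply: eq_bigr => j _; rewrite scalerBl.
under [RHS]eq_bigr do rewrite scalerBr.
by rewrite sumrB -scaler_suml sum_im scale0r subr0.
Qed.

Lemma u_brackets_span_su V :
  real_subspace V -> (forall U W, in_u U -> in_u W -> V (lie_br U W)) ->
  forall X, in_su X -> V X.
Proof.
move=> VV Vbr X [uX trX]; have [V0 VD VZ] := VV.
have [j0 _ | no_index] := pickP (@predT 'I_n); last first.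
  by have -> : X = 0 by apply/matrixP => j; have := no_index j.
have Vskew j k : j != k -> V (skew_unit j k (X j k)).
  have -> : X j k = 'i * (- 'i * X j k).
    by rewrite mulrA mulrN -expr2 sqr_i opprK mul1r.
  move=> neq_jk; rewrite -lie_br_imag_skew //.
  by apply: Vbr; [exact: imag_unit_in_u | exact: skew_unit_in_u].
have Vdiag j k z : V ((z - z^*) *: (delta_mx j j - delta_mx k k)).
  have [<-|neq_jk] := eqVneq j k; first by rewrite subrr scaler0.
  by rewrite -lie_br_skew_skew //; apply: Vbr; exact: skew_unit_in_u.
suff V2X : V (2%:R *: X).
  have := VZ 2^-1 _ V2X; rewrite scalerA -(rmorph_nat (real_complex R)).
  by rewrite -rmorphM mulVf ?pnatr_eq0 // rmorph1 scale1r.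
rewrite in_u_sum_skew_units //.
under eq_bigr => j _ do rewrite (bigD1 j) //=.
rewrite big_split; apply: VD.
  rewrite (traceless_sum_skew_diag j0 trX).
  by apply: real_subspace_sum => // j _; exact: Vdiag.
apply: real_subspace_sum => // j _; apply: real_subspace_sum => // k neq_kj.
by apply: Vskew; rewrite eq_sym.
Qed.

End SpecialUnitary.

Section AdwordSpan.
Variables (R : realType) (n : nat) (a l : 'M[R[i]]_n).
Local Notation M := 'M[R[i]]_n.
Local Notation lie_gen := (real_lie_generated (fun Y : M => Y = a \/ Y = l)).
Local Notation adword_span :=
  (real_span (fun Y : M => exists ks : seq nat, Y = adword a l ks (lie_br a l))).
Local Notation affine_span X :=
  (exists (al be : R) s, adword_span s /\ X = al%:C *: a + be%:C *: l + s).

Lemma lie_gen_a : lie_gen a.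
Proof. by apply: real_lie_generated_gen; left. Qed.

Lemma lie_gen_l : lie_gen l.
Proof. by apply: real_lie_generated_gen; right. Qed.

Lemma adword_span_sub_lie_traceless X : adword_span X -> lie_gen X /\ \tr X = 0.
Proof.
have [gV gB] : real_lie_subalgebra lie_gen := real_lie_generated_subalgebra _.
have br_closed Y Z : lie_gen Y -> lie_gen Z -> lie_gen (lie_br Y Z) /\ \tr (lie_br Y Z) = 0.
  by move=> gY gZ; split; [exact: gB | exact: mxtrace_lie_br].
move=> SX; apply: (SX (fun Y => lie_gen Y /\ \tr Y = 0)).
  by apply: real_subspaceI => //; exact: real_subspace_traceless.
move=> _ [ks ->]; apply: (adword_ind (Q := fun Y => lie_gen Y /\ \tr Y = 0)).
- by move=> Z [gZ _]; exact: br_closed lie_gen_a gZ.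
- by move=> Z [gZ _]; exact: br_closed lie_gen_l gZ.
- exact: br_closed lie_gen_a lie_gen_l.
Qed.

Lemma lie_stabilizer_adword_span_a : lie_stabilizer adword_span a.
Proof.
apply: real_span_stable; [exact: lie_brDr | exact: lie_brZr |].
by move=> _ [ks ->]; apply: real_span_gen; exists [:: 1%N, 0%N & ks].
Qed.

Lemma lie_stabilizer_adword_span_l : lie_stabilizer adword_span l.
Proof.
apply: real_span_stable; [exact: lie_brDr | exact: lie_brZr |].
by move=> _ [ks ->]; apply: real_span_gen; exists [:: 0%N, 1%N & ks].
Qed.

Lemma lie_gen_sub_stabilizer X : lie_gen X -> lie_stabilizer adword_span X.
Proof.
move=> gX; apply: (gX (lie_stabilizer adword_span)).
  exact/lie_stabilizer_subalgebra/real_span_subspace.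
by move=> _ [->|->]; [exact: lie_stabilizer_adword_span_a | exact: lie_stabilizer_adword_span_l].
Qed.

Lemma lie_br_affine_span U W :
  affine_span U -> affine_span W -> adword_span (lie_br U W).
Proof.
have S_sub : real_subspace adword_span by exact: real_span_subspace.
have [_ SD SZ] := S_sub.
have [[_ gD gZ] _] : real_lie_subalgebra lie_gen := real_lie_generated_subalgebra _.
have g_ab (al be : R) : lie_gen (al%:C *: a + be%:C *: l).
  by apply: gD; apply: gZ; [exact: lie_gen_a | exact: lie_gen_l].
have S_ab (al be al' be' : R) :
    adword_span (lie_br (al%:C *: a + be%:C *: l) (al'%:C *: a + be'%:C *: l)).
  rewrite lie_br_lincomb -!rmorphM -rmorphB; apply: SZ.
  by apply: real_span_gen; exists [::].
case=> [al [be [s [Ss ->]]]] [al' [be' [s' [Ss' ->]]]].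
have g_s' := proj1 (adword_span_sub_lie_traceless Ss').
rewrite lie_brDl; apply: (SD).
  rewrite lie_brDr; apply: (SD); first exact: S_ab.
  exact: lie_gen_sub_stabilizer (g_ab al be) _ Ss'.
rewrite [lie_br s _]lie_brC; apply: (real_subspaceN S_sub).
exact: lie_gen_sub_stabilizer (gD _ _ (g_ab al' be') g_s') _ Ss.
Qed.

Lemma affine_span_subalgebra : real_lie_subalgebra (fun X => affine_span X).
Proof.
have [S0 SD SZ] : real_subspace adword_span by exact: real_span_subspace.
split; first split.
- by exists 0, 0, 0; split=> //; rewrite rmorph0 !scale0r !addr0.
- move=> _ _ [al [be [s [Ss ->]]]] [al' [be' [s' [Ss' ->]]]].
  exists (al + al'), (be + be'), (s + s'); split; first exact: SD.
  by rewrite addrACA [_ + be%:C *: l + _]addrACA !rmorphD !scalerDl.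
- move=> r _ [al [be [s [Ss ->]]]].
  exists (r * al), (r * be), (r%:C *: s); split; first exact: SZ.
  by rewrite !scalerDr !scalerA !rmorphM.
- move=> U W U_aff W_aff; exists 0, 0, (lie_br U W).
  by split; [exact: lie_br_affine_span U_aff W_aff | rewrite rmorph0 !scale0r !add0r].
Qed.

Lemma lie_br_lie_gen U W : lie_gen U -> lie_gen W -> adword_span (lie_br U W).
Proof.
have [S0 _ _] : real_subspace adword_span by exact: real_span_subspace.
have gen_aff X : lie_gen X -> affine_span X.
  move=> gX; apply: (gX (fun X => affine_span X)); first exact: affine_span_subalgebra.
  move=> _ [->|->].
    by exists 1, 0, 0; rewrite rmorph1 rmorph0 scale1r scale0r !addr0.
  by exists 0, 1, 0; rewrite rmorph1 rmorph0 scale1r scale0r add0r addr0.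
by move=> /gen_aff U_aff /gen_aff W_aff; exact: lie_br_affine_span.
Qed.

End AdwordSpan.

Theorem lemma2p3 (R : realType) (n : nat) (A L : 'M[R]_n) :
  A^T = A -> L^T = L ->
  (forall X : 'M[R[i]]_n,
     real_lie_generated
       (fun Y => Y = 'i *: cplx_mx A \/ Y = 'i *: cplx_mx L) X
     <-> in_u X) ->
  forall X : 'M[R[i]]_n,
    real_span
      (fun Y => exists ks : seq nat,
         Y = adword ('i *: cplx_mx A) ('i *: cplx_mx L) ks
               (lie_br ('i *: cplx_mx A) ('i *: cplx_mx L))) X
    <-> in_su X.
Proof.
move=> _ _ gen_u X; split.
  by case/adword_span_sub_lie_traceless => /gen_u.
apply: u_brackets_span_su; first exact: real_span_subspace.
by move=> U W /gen_u gU /gen_u gW; exact: lie_br_lie_gen.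
Qed.
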